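(* Let $\mu_1,\mu_2\in(0,1)$ with $\mu_1>\mu_2$, and let $\mathcal{H}_\mu(\rho)=H_0\rho H_0^\dagger+H_1\rho H_1^\dagger$ with $H_0=|0\rangle\langle0|+\sqrt{\mu}\,|1\rangle\langle1|$ and $H_1=\sqrt{1-\mu}\,|0\rangle\langle1|$ be the qubit amplitude damping channel. Then all maximally entangled states of $\mathbb{C}^2\otimes\mathbb{C}^2$ are equivalent probes for distinguishing $\mathcal{H}_{\mu_1}$ and $\mathcal{H}_{\mu_2}$: the quantity $\|(\mathcal{H}_{\mu_1}\otimes\mathrm{id})(\rho_{AB})-(\mathcal{H}_{\mu_2}\otimes\mathrm{id})(\rho_{AB})\|_1$ (hence the success probability) takes the same value for every maximally entangled pure state $\rho_{AB}$.
   Context: For two channels chosen with equal priors $1/2$ and a bipartite probe $\rho_{AB}$ (channel acting on subsystem $A$), the single-shot success probability is $\frac12+\frac14\|(\mathcal{N}_1\otimes\mathrm{id})(\rho_{AB})-(\mathcal{N}_2\otimes\mathrm{id})(\rho_{AB})\|_1$, where $\|\cdot\|_1$ is the trace norm. A two-qubit pure state is maximally entangled if its reduced states are $\mathbb{I}_2/2$. Probes are equivalent if they give the same success probability. *)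

(* matrices over the complex numbers R[i] of a real closed field R
   (mathcomp-real-closed); R = the real numbers is the intended instance. *)
From HB Require Import structures.
From mathcomp Require Import all_boot all_order all_algebra.
From mathcomp Require Import complex mxtens.
From Stdlib Require Import ClassicalEpsilon.
Set Implicit Arguments. Unset Strict Implicit. Unset Printing Implicit Defensive.
Import Order.TTheory GRing.Theory Num.Theory.
Local Open Scope ring_scope.

Definition adj {C : numClosedFieldType} {m n : nat} (A : 'M[C]_(m, n)) : 'M[C]_(n, m) :=
  (map_mx Num.conj A)^T.

Definition psd {C : numClosedFieldType} {n : nat} (B : 'M[C]_n) : Prop :=
  adj B = B /\ forall x : 'cV[C]_n, 0 <= (adj x *m B *m x) 0 0.

Definition tracenorm {C : numClosedFieldType} {n : nat} (A : 'M[C]_n) : C :=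
  \tr (epsilon (inhabits (0 : 'M[C]_n))
         (fun B : 'M[C]_n => psd B /\ B *m B = adj A *m A)).

(* partial traces on 'M_(m * n) = operators on C^m (x) C^n (index (i,j) ~ mxtens_index) *)
Definition ptraceB {C : numClosedFieldType} {m n : nat} (X : 'M[C]_(m * n)) : 'M[C]_m :=
  \matrix_(i, i') \sum_(j < n) X (mxtens_index (i, j)) (mxtens_index (i', j)).
Definition ptraceA {C : numClosedFieldType} {m n : nat} (X : 'M[C]_(m * n)) : 'M[C]_n :=
  \matrix_(j, j') \sum_(i < m) X (mxtens_index (i, j)) (mxtens_index (i, j')).

Definition max_entangled {C : numClosedFieldType} (rho : 'M[C]_(2 * 2)) : Prop :=
  (exists psi : 'cV[C]_(2 * 2), rho = psi *m adj psi) /\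
  ptraceB rho = 2^-1%:M /\ ptraceA rho = 2^-1%:M.

Definition H0 (R : rcfType) (mu : R) : 'M[R[i]]_2 :=
  \matrix_(i, j) (if (i == 0) && (j == 0) then 1
                  else if (i == 1) && (j == 1) then (Num.sqrt mu)%:C%C else 0).
Definition H1 (R : rcfType) (mu : R) : 'M[R[i]]_2 :=
  \matrix_(i, j) (if (i == 0) && (j == 1) then (Num.sqrt (1 - mu))%:C%C else 0).

Definition ampdamp (R : rcfType) (mu : R) (rho : 'M[R[i]]_2) : 'M[R[i]]_2 :=
  H0 mu *m rho *m adj (H0 mu) + H1 mu *m rho *m adj (H1 mu).

Definition ampdamp_id (R : rcfType) (mu : R) (rho : 'M[R[i]]_(2 * 2)) : 'M[R[i]]_(2 * 2) :=
  (H0 mu *t 1%:M) *m rho *m adj (H0 mu *t (1%:M : 'M[R[i]]_2))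
  + (H1 mu *t 1%:M) *m rho *m adj (H1 mu *t (1%:M : 'M[R[i]]_2)).

(* Writing a two-qubit vector psi as its 2 x 2 coefficient matrix M, the two
   reduced states of psi psi^* are M M^* and (M^* M)^T, so psi is maximally
   entangled iff sqrt 2 M is unitary.  Hence any two maximally entangled states
   differ by a unitary 1 (x) V acting on the second qubit only; it commutes with
   the Kraus operators K (x) 1 of any channel acting on the first qubit, and the
   trace norm is invariant under unitary conjugation because the positive square
   root of A^* A is unique. *)

From mathcomp Require Import all_boot all_order all_algebra.
From mathcomp Require Import complex mxtens ring.
From Stdlib Require Import ClassicalEpsilon FunctionalExtensionality PropExtensionality.
Set Implicit Arguments.
Unset Strict Implicit.
Unset Printing Implicit Defensive.

Import Order.TTheory GRing.Theory Num.Theory.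
Local Open Scope ring_scope.
Local Open Scope sesquilinear_scope.

Section ComplexMatrices.
Variable C : numClosedFieldType.

Lemma adjE m n (A : 'M[C]_(m, n)) : adj A = A ^t*.
Proof. by rewrite /adj map_trmx. Qed.

Lemma adjK m n (A : 'M[C]_(m, n)) : adj (adj A) = A.
Proof. by rewrite !adjE trmxCK. Qed.

Lemma adjM m n p (A : 'M[C]_(m, n)) (B : 'M[C]_(n, p)) :
  adj (A *m B) = adj B *m adj A.
Proof. by rewrite /adj map_mxM trmx_mul. Qed.

Lemma adjB m n (A B : 'M[C]_(m, n)) : adj (A - B) = adj A - adj B.
Proof. by apply/matrixP=> i j; rewrite !mxE rmorphB. Qed.

Lemma adjZ m n a (A : 'M[C]_(m, n)) : adj (a *: A) = a^* *: adj A.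
Proof. by apply/matrixP=> i j; rewrite !mxE rmorphM. Qed.

Lemma adj1 n : adj (1%:M : 'M[C]_n) = 1%:M.
Proof. by rewrite /adj map_mx1 trmx1. Qed.

Lemma adj_tens m n p q (A : 'M[C]_(m, n)) (B : 'M[C]_(p, q)) :
  adj (A *t B) = adj A *t adj B.
Proof. by rewrite /adj map_mxT trmx_tens. Qed.

Lemma unitarymx_adjP n (W : 'M[C]_n) :
  W \is unitarymx -> W *m adj W = 1%:M /\ adj W *m W = 1%:M.
Proof. by rewrite adjE => /unitarymxP WWt; split; last exact: mulmx1C. Qed.

Lemma sqnormE n (y : 'cV[C]_n) : (adj y *m y) 0 0 = \sum_i `|y i 0| ^+ 2.
Proof. by rewrite mxE; apply: eq_bigr => i _; rewrite !mxE mulrC -normCK. Qed.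

Lemma sqnorm_ge0 n (y : 'cV[C]_n) : 0 <= (adj y *m y) 0 0.
Proof. by rewrite sqnormE sumr_ge0 // => i _; rewrite exprn_ge0. Qed.

Lemma sqnorm_eq0 n (y : 'cV[C]_n) : (adj y *m y) 0 0 = 0 -> y = 0.
Proof.
rewrite sqnormE => /psumr_eq0P y0; apply/matrixP => i j; rewrite [j]ord1 mxE.
by apply/eqP; rewrite -normr_eq0 -sqrf_eq0 y0 // => k _; rewrite exprn_ge0.
Qed.

Lemma psd1 n : psd (1%:M : 'M[C]_n).
Proof. by split=> [|x]; rewrite ?adj1 // mulmx1 sqnorm_ge0. Qed.

Lemma psd_conj n (B W : 'M[C]_n) : psd B -> psd (adj W *m B *m W).
Proof.
case=> B_herm B_ge0; split; first by rewrite !adjM adjK B_herm mulmxA.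
move=> x; have -> : adj x *m (adj W *m B *m W) *m x = adj (W *m x) *m B *m (W *m x).
  by rewrite adjM !mulmxA.
exact: B_ge0.
Qed.

Lemma psd_form_eq0 n (B : 'M[C]_n) (x : 'cV[C]_n) :
  psd B -> (adj x *m B *m x) 0 0 = 0 -> B *m x = 0.
Proof.
case=> B_herm B_ge0 x0; set y := B *m x.
set s := (adj y *m y) 0 0; set c := (adj y *m B *m y) 0 0.
have s_ge0 : 0 <= s := sqnorm_ge0 y.
have c_ge0 : 0 <= c := B_ge0 y.
have xBy : adj x *m B *m y = adj y *m y by rewrite /y adjM B_herm.
have yBx : adj y *m B *m x = adj y *m y by rewrite -mulmxA.
(* The form at (c + 1) x - s y equals - s^2 (c + 2), which forces s = 0. *)
have := B_ge0 ((c + 1) *: x - s *: y).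
rewrite adjB !adjZ !(conj_Creal (ger0_real _)) ?addr_ge0 //.
rewrite !mulmxBl !mulmxBr -!scalemxAl -!scalemxAr !scalerA xBy yBx.
rewrite (mx11_scalar (adj x *m B *m x)) x0 (mx11_scalar (adj y *m y)).
rewrite (mx11_scalar (adj y *m B *m y)) -/s -/c !mxE eqxx !mulr1n.
have -> : (c + 1) * (c + 1) * 0 - (c + 1) * s * s - (s * (c + 1) * s - s * s * c)
  = - (s * s * (c + 2)) by ring.
rewrite oppr_ge0 => le0.
have : s * s * (c + 2) == 0 by rewrite eq_le le0 !mulr_ge0 ?addr_ge0.
have c2_gt0 : 0 < c + 2 by rewrite ltr_wpDl.
by rewrite !mulf_eq0 orbb (gt_eqF c2_gt0) orbF => /eqP /sqnorm_eq0.
Qed.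

Lemma trace_formE n (B X : 'M[C]_n) :
  \tr (adj X *m B *m X) = \sum_k (adj (col k X) *m B *m col k X) 0 0.
Proof.
apply: eq_bigr => k _; rewrite !mxE; apply: eq_bigr => j _; rewrite !mxE.
by congr (_ * _); apply: eq_bigr => l _; rewrite !mxE.
Qed.

Lemma psd_trace_form_ge0 n (B X : 'M[C]_n) : psd B -> 0 <= \tr (adj X *m B *m X).
Proof. by case=> _ B_ge0; rewrite trace_formE sumr_ge0. Qed.

Lemma psd_trace_form_eq0 n (B X : 'M[C]_n) :
  psd B -> \tr (adj X *m B *m X) = 0 -> B *m X = 0.
Proof.
move=> psdB; rewrite trace_formE => /psumr_eq0P forms0.
have colBX k : col k (B *m X) = 0.
  rewrite colE -mulmxA -colE psd_form_eq0 // forms0 // => l _.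
  by case: psdB => _; apply.
apply/matrixP => i k.
by have := congr1 (fun v : 'cV_n => v i 0) (colBX k); rewrite !mxE.
Qed.

Lemma mxtrace_mulACA n (P Q : 'M[C]_n) : \tr (P *m (Q *m P)) = \tr (P *m (P *m Q)).
Proof. by rewrite mxtrace_mulC -mulmxA [in RHS]mulmxA mxtrace_mulC. Qed.

Lemma psd_sqrt_unique n (B D : 'M[C]_n) :
  psd B -> psd D -> B *m B = D *m D -> B = D.
Proof.
move=> psdB psdD BD; have [B_herm _] := psdB; have [D_herm _] := psdD.
set X := B - D; have X_herm : adj X = X by rewrite adjB B_herm D_herm.
(* B^2 = D^2 turns (B + D) X into D B - B D, whose product with X is traceless. *)
have forms0 : \tr (adj X *m B *m X) + \tr (adj X *m D *m X) = 0.
  rewrite -mxtraceD -mulmxDl -mulmxDr X_herm -mulmxA.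
  have -> : (B + D) *m X = D *m B - B *m D.
    by rewrite mulmxBr !mulmxDl BD [D *m D + _]addrC opprD addrACA subrr addr0.
  by rewrite /X mulmxBl !mulmxBr !raddfB /= !mxtrace_mulACA !subrr addr0.
have /eqP := forms0; rewrite paddr_eq0 ?psd_trace_form_ge0 //.
move=> /andP[/eqP /(psd_trace_form_eq0 psdB) BX /eqP /(psd_trace_form_eq0 psdD) DX].
have XX : \tr (adj X *m 1%:M *m X) = 0.
  by rewrite mulmx1 X_herm {1}/X mulmxBl BX DX subrr mxtrace0.
apply/subr0_eq; rewrite -/X.
by rewrite -[X]mul1mx (psd_trace_form_eq0 (psd1 n) XX).
Qed.

Lemma tracenorm_sqrt n (A B : 'M[C]_n) :
  psd B -> B *m B = adj A *m A -> tracenorm A = \tr B.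
Proof.
move=> psdB BB; rewrite /tracenorm; set E := epsilon _ _.
have [psdE EE] : psd E /\ E *m E = adj A *m A.
  by apply: (epsilon_spec _ (fun E => psd E /\ _)); exists B.
by rewrite (psd_sqrt_unique psdE psdB) // EE BB.
Qed.

Lemma psd_sqrt_conj n (W B M : 'M[C]_n) : adj W *m W = 1%:M ->
  psd B -> B *m B = M ->
  psd (W *m B *m adj W) /\
  W *m B *m adj W *m (W *m B *m adj W) = W *m M *m adj W.
Proof.
move=> WtW psdB BB; split; first by rewrite -{1}[W]adjK; apply: psd_conj.
by rewrite !mulmxA -(mulmxA _ (adj W) W) WtW mulmx1 -(mulmxA W B B) BB.
Qed.

Lemma tracenorm_unitary_conj n (W A : 'M[C]_n) :
  W \is unitarymx -> tracenorm (W *m A *m adj W) = tracenorm A.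
Proof.
move=> /unitarymx_adjP[WWt WtW].
have AW : adj (W *m A *m adj W) *m (W *m A *m adj W) = W *m (adj A *m A) *m adj W.
  by rewrite !adjM adjK !mulmxA -(mulmxA _ (adj W) W) WtW mulmx1.
have [[B [psdB BB]] | no_sqrt] := classic (exists B, psd B /\ B *m B = adj A *m A).
  have [psdWB WBB] := psd_sqrt_conj WtW psdB BB.
  rewrite (tracenorm_sqrt psdB BB) (tracenorm_sqrt psdWB) ?AW //.
  by rewrite mxtrace_mulC mulmxA WtW mul1mx.
(* Without a square root both trace norms are the same junk value of epsilon. *)
rewrite /tracenorm AW; congr (\tr (epsilon _ _)).
apply: functional_extensionality => B; apply: propositional_extensionality.
split=> [[psdB BB] | sqrtB]; exfalso; apply: no_sqrt; last by exists B.
have WtWt : adj (adj W) *m adj W = 1%:M by rewrite adjK.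
have [psdWB WBB] := psd_sqrt_conj WtWt psdB BB.
exists (adj W *m B *m adj (adj W)); split=> //.
by rewrite WBB adjK !mulmxA WtW mul1mx -mulmxA WtW mulmx1.
Qed.

Lemma tensmx11 m n : (1%:M : 'M[C]_m) *t (1%:M : 'M[C]_n) = 1%:M.
Proof.
apply/matrixP=> i j.
case: (mxtens_indexP i) => i0 i1; case: (mxtens_indexP j) => j0 j1.
rewrite tensmxE !mxE (can_eq (@mxtens_indexK _ _)) xpair_eqE.
by case: (i0 == j0); case: (i1 == j1); rewrite ?mulr1 ?mulr0.
Qed.

Lemma unitarymx_1tens m n (V : 'M[C]_n) :
  V \is unitarymx -> (1%:M : 'M[C]_m) *t V \is unitarymx.
Proof.
move=> /unitarymx_adjP[VVt _]; apply/unitarymxP.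
by rewrite -adjE adj_tens adj1 tensmx_mul mulmx1 VVt tensmx11.
Qed.

Lemma tensmx1_comm m n (K : 'M[C]_m) (V : 'M[C]_n) :
  (K *t 1%:M) *m (1%:M *t V) = (1%:M *t V) *m (K *t 1%:M).
Proof. by rewrite -tensmx_decr -tensmx_decl. Qed.

Lemma conj_comm n (K W X : 'M[C]_n) : K *m W = W *m K ->
  K *m (W *m X *m adj W) *m adj K = W *m (K *m X *m adj K) *m adj W.
Proof.
move=> KW; have WtKt : adj W *m adj K = adj K *m adj W by rewrite -!adjM KW.
by rewrite !mulmxA KW -!mulmxA WtKt.
Qed.

Lemma sum_mxtens_index m n (F : 'I_(m * n) -> C) :
  \sum_k F k = \sum_(i < m) \sum_(j < n) F (mxtens_index (i, j)).
Proof.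
rewrite (reindex (@mxtens_index m n)) /=.
  by rewrite pair_big; apply: eq_bigr => -[].
exists (@mxtens_unindex m n) => k _.
  exact: mxtens_indexK.
exact: mxtens_unindexK.
Qed.

Definition coefmx m n (psi : 'cV[C]_(m * n)) : 'M[C]_(m, n) :=
  \matrix_(i, j) psi (mxtens_index (i, j)) 0.

Lemma coefmx_inj m n : injective (@coefmx m n).
Proof.
move=> psi phi psi_phi; apply/matrixP => k z; rewrite [z]ord1.
case: (mxtens_indexP k) => i j.
by have := congr1 (fun M : 'M_(m, n) => M i j) psi_phi; rewrite !mxE.
Qed.

Lemma coefmx_1tens m n (V : 'M[C]_n) (phi : 'cV[C]_(m * n)) :
  coefmx ((1%:M *t V) *m phi) = coefmx phi *m V^T.
Proof.
apply/matrixP => i j; rewrite !mxE sum_mxtens_index (bigD1 i) //=.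
rewrite [X in _ + X]big1 ?addr0.
  by apply: eq_bigr => l _; rewrite tensmxE !mxE eqxx mul1r mulrC.
move=> k /negbTE ki; apply: big1 => l _.
by rewrite tensmxE !mxE eq_sym ki !mul0r.
Qed.

Lemma ptraceB_outer m n (psi : 'cV[C]_(m * n)) :
  ptraceB (psi *m adj psi) = coefmx psi *m adj (coefmx psi).
Proof.
apply/matrixP => i i'; rewrite !mxE; apply: eq_bigr => j _.
by rewrite mxE big_ord1 !mxE.
Qed.

Lemma ptraceA_outer m n (psi : 'cV[C]_(m * n)) :
  ptraceA (psi *m adj psi) = (adj (coefmx psi) *m coefmx psi)^T.
Proof.
apply/matrixP => j j'; rewrite !mxE; apply: eq_bigr => i _.
by rewrite mxE big_ord1 !mxE mulrC.
Qed.

Lemma unitary_right_factor n (k : C) (M N : 'M[C]_n) : 0 < k ->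
  M *m adj M = k%:M -> adj M *m M = k%:M -> N *m adj N = k%:M ->
  exists2 U, U \is unitarymx & N = M *m U.
Proof.
move=> k_gt0 MMt MtM NNt; have k_neq0 : k != 0 by rewrite gt_eqF.
have kV_real : (k^-1)^* = k^-1 by rewrite conj_Creal // realV gtr0_real.
exists (k^-1 *: (adj M *m N)).
  apply/unitarymxP; rewrite -adjE adjZ adjM adjK kV_real -scalemxAl -scalemxAr.
  rewrite scalerA !mulmxA -(mulmxA _ N) NNt mul_mx_scalar -scalemxAl MtM.
  by rewrite !scale_scalar_mx; congr (_%:M); field.
by rewrite -scalemxAr mulmxA MMt mul_scalar_mx scalerA mulVf // scale1r.
Qed.

Lemma max_entangled_local_unitary (rho sigma : 'M[C]_(2 * 2)) :
  max_entangled rho -> max_entangled sigma ->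
  exists2 V : 'M[C]_2, V \is unitarymx &
    rho = (1%:M *t V) *m sigma *m adj (1%:M *t V).
Proof.
move=> [[psi ->] [rhoB _]] [[phi ->] [sigmaB sigmaA]].
move: rhoB sigmaB sigmaA; rewrite !ptraceB_outer ptraceA_outer => rhoB sigmaB sigmaA.
have sigmaA' : adj (coefmx phi) *m coefmx phi = 2^-1%:M.
  by apply: trmx_inj; rewrite sigmaA tr_scalar_mx.
have half_gt0 : 0 < 2^-1 :> C by rewrite invr_gt0 ltr0n.
have [U U_unitary psiE] := unitary_right_factor half_gt0 sigmaB sigmaA' rhoB.
exists U^T; first by rewrite trmx_unitary.
have -> : psi = (1%:M *t U^T) *m phi by apply: coefmx_inj; rewrite coefmx_1tens trmxK.
by rewrite adjM !mulmxA.
Qed.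

End ComplexMatrices.

Lemma ampdamp_id_local_conj (R : rcfType) (mu : R) (V : 'M[R[i]]_2)
    (X : 'M[R[i]]_(2 * 2)) :
  ampdamp_id mu ((1%:M *t V) *m X *m adj (1%:M *t V))
  = (1%:M *t V) *m ampdamp_id mu X *m adj (1%:M *t V).
Proof. by rewrite /ampdamp_id !(conj_comm _ (tensmx1_comm _ V)) -mulmxDl -mulmxDr. Qed.

Theorem lemma3 (R : rcfType) (mu1 mu2 : R)
  (h1 : 0 < mu1 < 1) (h2 : 0 < mu2 < 1) (h12 : mu2 < mu1)
  (rho sigma : 'M[R[i]]_(2 * 2)) :
  max_entangled rho -> max_entangled sigma ->
  tracenorm (ampdamp_id mu1 rho - ampdamp_id mu2 rho) =
  tracenorm (ampdamp_id mu1 sigma - ampdamp_id mu2 sigma).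
Proof.
move=> rho_me sigma_me.
have [V V_unitary ->] := max_entangled_local_unitary rho_me sigma_me.
rewrite !ampdamp_id_local_conj -mulmxBl -mulmxBr.
by rewrite tracenorm_unitary_conj // unitarymx_1tens.
Qed.
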